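(* Let $G$ be a finite connected weighted graph with $N$ vertices and let $0=\lambda_0<\lambda_1\le\cdots\le\lambda_{N-1}$ be the eigenvalues (with multiplicity) of its weighted Laplacian $L_w$. Let $0\le k\le N-1$. Then for every $S_0\subset V(G)$ with $|S_0|\le k$ and every partition $\mathcal{S}=(S_m)_{m=0,\ldots,n}$ of $V(G)$ with initial set $S_0$ and $K_m(\mathcal{S})>0$ for $m=0,\ldots,n-1$, \[ \lambda_k\ge\left(2\delta_{\mathcal{S},2}^2\right)^{-1}; \] equivalently, $\lambda_k\ge\max_{\mathcal{S}}(2\delta_{\mathcal{S},2}^2)^{-1}$, the maximum over all such partitions whose initial set has at most $k$ elements.
   Context: $G$ has vertex set $V(G)$ and symmetric weights $w\ge0$ with $w(u,u)=0$; connected with respect to edges $\{w(u,v)>0\}$. $(L_wf)(v)=\sum_u(f(v)-f(u))w(v,u)$ on $\ell^2(G)$ (vertex weight $\nu\equiv1$). $w_A(v)=\sum_{u\in A}w(u,v)$; $D_m=\sup_{v\in S_m}w_{S_{m+1}}(v)$, $K_m=\inf_{v\in S_{m+1}}w_{S_m}(v)$; $\delta_{\mathcal{S},2}=\left(\sum_{m=1}^n\sum_{j=1}^m\frac{1}{K_{j-1}}\prod_{i=j}^{m-1}\frac{D_i}{K_i}\right)^{1/2}$ (empty products $=1$, empty sums $=0$). *)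

From HB Require Import structures.
From mathcomp Require Import all_boot all_order all_algebra.
From mathcomp Require Import reals.
Set Implicit Arguments. Unset Strict Implicit. Unset Printing Implicit Defensive.
Import Order.TTheory GRing.Theory Num.Theory.
Local Open Scope ring_scope.

Section Graph.
Variables (R : realType) (N : nat) (w : 'I_N -> 'I_N -> R).

Definition weighted_graph : Prop :=
  [/\ forall u v, w u v = w v u,
      forall u v, 0 <= w u v,
      forall u, w u u = 0 &
      forall u v, connect (fun a b => 0 < w a b) u v].

Definition laplacian : 'M[R]_N :=
  \matrix_(i, j) ((if i == j then \sum_u w i u else 0) - w i j).

Definition laplacian_spectrum (s : seq R) : Prop :=
  [/\ size s = N, sorted <=%R s &
      char_poly laplacian = \prod_(x <- s) ('X - x%:P)].

Definition wset (A : {set 'I_N}) (v : 'I_N) : R := \sum_(u in A) w u v.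

(* total weight: an upper bound for every w_A(v), used as the neutral
   element of the (nonempty) finite infimum below *)
Definition wtot : R := \sum_u \sum_v w u v.

Definition is_partition (n : nat) (S : nat -> {set 'I_N}) : Prop :=
  [/\ forall m, (m <= n)%N -> S m != set0,
      forall i j, (i <= n)%N -> (j <= n)%N -> i <> j -> [disjoint S i & S j] &
      forall v, exists2 m, (m <= n)%N & v \in S m].

(* D_m = sup_{v in S_m} w_{S_{m+1}}(v)  (values are >= 0, S_m nonempty) *)
Definition Dm (S : nat -> {set 'I_N}) (m : nat) : R :=
  \big[Num.max/0]_(v in S m) wset (S m.+1) v.

(* K_m = inf_{v in S_{m+1}} w_{S_m}(v)  (S_{m+1} nonempty) *)
Definition Km (S : nat -> {set 'I_N}) (m : nat) : R :=
  \big[Num.min/wtot]_(v in S m.+1) wset (S m) v.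

Definition delta2sq (n : nat) (S : nat -> {set 'I_N}) : R :=
  \sum_(1 <= m < n.+1) \sum_(1 <= j < m.+1)
     (Km S j.-1)^-1 * \prod_(j <= i < m) (Dm S i / Km S i).

End Graph.

From HB Require Import structures.
From mathcomp Require Import all_boot all_order all_algebra.
From mathcomp Require Import reals complex ring lra.
Import Order.TTheory GRing.Theory Num.Theory.
Local Open Scope ring_scope.
Set Implicit Arguments. Unset Strict Implicit. Unset Printing Implicit Defensive.

(** The bound follows from a discrete Hardy inequality: every [g] vanishing on
    [S_0] satisfies [sum_v g(v)^2 <= delta^2 * sum_(u,v) w(u,v) (g u - g v)^2
    = 2 delta^2 <g, L g>].  It is proved layer by layer: with [a_m] the mass of
    [g^2] on [S_m] and [E_m] the energy of the edges between [S_m] and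
    [S_(m+1)], a weighted Cauchy-Schwarz inequality on these edges turns
    [a_m <= P_m (E_0 + ... + E_(m-1))] into the same bound at [m + 1], where
    [P_m] is the m-th summand of [delta^2].  Hence the Rayleigh quotient of
    [L] is at least [(2 delta^2)^-1] on a subspace of codimension
    [|S_0| <= k], and by the min-max principle at most [k] eigenvalues lie
    below that value. *)

Lemma ler_addgt0_mulr (R : realFieldType) (x y z : R) :
  0 <= z -> (forall e, 0 < e -> x <= y + e * z) -> x <= y.
Proof.
move=> z_ge0 hxy; apply/ler_addgt0Pr => e e_gt0.
have z1_gt0 : 0 < z + 1 by rewrite ltr_wpDl.
apply: le_trans (hxy (e / (z + 1)) _) _; first by rewrite divr_gt0.
by rewrite lerD2l -mulrA ger_pMr // mulrC ler_pdivrMr // mul1r lerDl.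
Qed.

Lemma weighted_sqr_cauchy (R : realDomainType) (a b c x y : R) : 0 <= c ->
  a * b * (c * x ^+ 2) <= (a + b) * (b * (c * (y - x) ^+ 2) + a * (c * y ^+ 2)).
Proof.
move=> c_ge0; rewrite -subr_ge0.
have -> : (a + b) * (b * (c * (y - x) ^+ 2) + a * (c * y ^+ 2)) - a * b * (c * x ^+ 2)
    = c * (b * (x - y) - a * y) ^+ 2 by ring.
by rewrite mulr_ge0 ?sqr_ge0.
Qed.

Lemma big_partition (R : nmodType) N n (S : nat -> {set 'I_N}) (h : 'I_N -> R) :
  is_partition n S -> \sum_v h v = \sum_(0 <= m < n.+1) \sum_(v in S m) h v.
Proof.
case=> _ S_disj S_cover; rewrite big_mkord.
rewrite -(@partition_disjoint_bigcup _ _ _ _ _ (fun m : 'I_n.+1 => S m)); last first.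
  move=> i j /eqP ij; apply: S_disj; [exact: ltn_ord i | exact: ltn_ord j |].
  by move=> eq_ij; apply: ij; apply: val_inj.
apply: eq_bigl => v; symmetry; apply/bigcupP.
have [m m_le v_in] := S_cover v.
by exists (Ordinal (m_le : (m < n.+1)%N)).
Qed.

Lemma partition_length_gt0 N n (S : nat -> {set 'I_N}) :
  is_partition n S -> (#|S 0%N| < N)%N -> (0 < n)%N.
Proof.
case=> _ _ S_cover S0_lt; rewrite lt0n; apply: contraTneq S0_lt => n0.
rewrite -leqNgt -[X in (X <= _)%N]card_ord; apply/subset_leq_card/subsetP => v _.
by have [m] := S_cover v; rewrite n0 leqn0 => /eqP <-.
Qed.

Definition qform (R : comNzRingType) N (A : 'M[R]_N) (g : 'I_N -> R) :=
  \sum_i \sum_j g i * A i j * g j.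

Section Hardy.
Variables (R : realType) (N : nat) (w : 'I_N -> 'I_N -> R) (S : nat -> {set 'I_N}).
Hypotheses (w_sym : forall u v, w u v = w v u) (w_ge0 : forall u v, 0 <= w u v).

Lemma wset_ge0 A v : 0 <= wset w A v.
Proof. exact: sumr_ge0. Qed.

Lemma Dm_ge0 m : 0 <= Dm w S m.
Proof.
apply: (big_ind (fun x => 0 <= x)) => // [x y x_ge0 y_ge0|v _].
  by rewrite le_max x_ge0.
exact: wset_ge0.
Qed.

Lemma Km_ge0 m : 0 <= Km w S m.
Proof.
apply: (big_ind (fun x => 0 <= x)) => [|x y x_ge0 y_ge0|v _].
- by apply: sumr_ge0 => u _; apply: sumr_ge0.
- by rewrite le_min x_ge0.
- exact: wset_ge0.
Qed.

Lemma wset_le_Dm m u : u \in S m -> wset w (S m.+1) u <= Dm w S m.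
Proof. by move=> u_in; apply: (le_bigmax_cond _ (P := mem (S m))). Qed.

Lemma Km_le_wset m v : v \in S m.+1 -> Km w S m <= wset w (S m) v.
Proof. by move=> v_in; apply: (bigmin_le_cond _ (P := mem (S m.+1))). Qed.

Definition delta_term m :=
  \sum_(1 <= j < m.+1) (Km w S j.-1)^-1 * \prod_(j <= i < m) (Dm w S i / Km w S i).

Lemma delta_term0 : delta_term 0 = 0.
Proof. by rewrite /delta_term big_geq. Qed.

Lemma delta_termS m :
  delta_term m.+1 = (Km w S m)^-1 + Dm w S m / Km w S m * delta_term m.
Proof.
rewrite /delta_term big_nat_recr //= [X in _ * X]big_geq // mulr1 addrC.
congr (_ + _); rewrite mulr_sumr; apply: eq_big_nat => j /andP [_ j_le].
by rewrite big_nat_recr //= [in RHS]mulrC -mulrA.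
Qed.

Lemma delta_term_ge0 m : 0 <= delta_term m.
Proof.
apply: sumr_ge0 => j _; rewrite mulr_ge0 ?invr_ge0 ?Km_ge0 //.
by apply: prodr_ge0 => i _; rewrite divr_ge0 ?Dm_ge0 ?Km_ge0.
Qed.

Lemma delta2sqE n : delta2sq w n S = \sum_(1 <= m < n.+1) delta_term m.
Proof. by []. Qed.

Lemma laplacian_sym : (laplacian w)^T = laplacian w.
Proof.
apply/matrixP => i j; rewrite !mxE eq_sym.
by have [->|_] := eqVneq i j; rewrite // w_sym.
Qed.

Variable g : 'I_N -> R.

Definition layer_mass m := \sum_(v in S m) g v ^+ 2.

Definition layer_energy m :=
  \sum_(u in S m) \sum_(v in S m.+1) w u v * (g u - g v) ^+ 2.

Definition energy_below m := \sum_(0 <= j < m) layer_energy j.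

Definition dirichlet := \sum_u \sum_v w u v * (g u - g v) ^+ 2.

Lemma dirichlet_laplacian : dirichlet = 2 * qform (laplacian w) g.
Proof.
have expand : dirichlet = \sum_i \sum_j (w i j * g i ^+ 2 - 2 * (w i j * g i * g j))
                              + \sum_i \sum_j w i j * g j ^+ 2.
  rewrite /dirichlet -big_split; apply: eq_bigr => i _ /=.
  by rewrite -big_split; apply: eq_bigr => j _ /=; ring.
have swap : \sum_i \sum_j w i j * g j ^+ 2 = \sum_i \sum_j w i j * g i ^+ 2.
  by rewrite exchange_big; apply: eq_bigr => i _; apply: eq_bigr => j _; rewrite w_sym.
have lapl : qform (laplacian w) g = \sum_i \sum_j (w i j * g i ^+ 2 - w i j * g i * g j).
  apply: eq_bigr => i _.
  under eq_bigr do rewrite mxE mulrBr mulrBl.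
  rewrite sumrB (bigD1 i) //= eqxx [X in _ + X - _]big1 ?addr0; last first.
    by move=> j j_neq_i; rewrite eq_sym (negbTE j_neq_i) mulr0 mul0r.
  by rewrite mulr_sumr mulr_suml -sumrB; apply: eq_bigr => j _; ring.
rewrite expand swap lapl mulr_sumr -big_split; apply: eq_bigr => i _ /=.
by rewrite mulr_sumr -big_split; apply: eq_bigr => j _ /=; ring.
Qed.

Lemma layer_energy_ge0 m : 0 <= layer_energy m.
Proof. by do 2![apply: sumr_ge0 => ? _]; rewrite mulr_ge0 ?sqr_ge0. Qed.

Lemma energy_below_ge0 m : 0 <= energy_below m.
Proof. by apply: sumr_ge0 => j _; apply: layer_energy_ge0. Qed.

Lemma energy_belowS m : energy_below m.+1 = layer_energy m + energy_below m.
Proof. by rewrite /energy_below big_nat_recr //= addrC. Qed.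

Lemma Km_layer_mass_le m :
  Km w S m * layer_mass m.+1 <= \sum_(u in S m) \sum_(v in S m.+1) w u v * g v ^+ 2.
Proof.
rewrite exchange_big mulr_sumr; apply: ler_sum => v v_in.
by rewrite -mulr_suml ler_wpM2r ?sqr_ge0 ?Km_le_wset.
Qed.

Lemma inner_mass_le_Dm m :
  \sum_(u in S m) \sum_(v in S m.+1) w u v * g u ^+ 2 <= Dm w S m * layer_mass m.
Proof.
rewrite mulr_sumr; apply: ler_sum => u u_in.
rewrite -mulr_suml ler_wpM2r ?sqr_ge0 //; apply: le_trans (wset_le_Dm u_in).
by under eq_bigr do rewrite w_sym.
Qed.

Lemma layer_cauchy m a b :
  a * b * (\sum_(u in S m) \sum_(v in S m.+1) w u v * g v ^+ 2) <=
  (a + b) * (b * layer_energy m + a * \sum_(u in S m) \sum_(v in S m.+1) w u v * g u ^+ 2).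
Proof.
rewrite /layer_energy !mulr_sumr -big_split mulr_sumr; apply: ler_sum => u _ /=.
rewrite !mulr_sumr -big_split mulr_sumr; apply: ler_sum => v _ /=.
exact: weighted_sqr_cauchy.
Qed.

Lemma layer_mass_step m : 0 < Km w S m ->
  layer_mass m <= delta_term m * energy_below m ->
  layer_mass m.+1 <= delta_term m.+1 * energy_below m.+1.
Proof.
set K := Km w S m; set D := Dm w S m; set P := delta_term m.
set E := layer_energy m; set F := energy_below m => K_gt0 mass_le.
rewrite energy_belowS delta_termS -/K -/D -/P -/E -/F.
apply: (@ler_addgt0_mulr _ _ _ (E + F)) => [|e e_gt0].
  by rewrite addr_ge0 ?layer_energy_ge0 ?energy_below_ge0.
(* [layer_cauchy] with [a = 1/K] and [b = a D P]; the extra [e] keeps [b]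
   invertible, as [D P] may vanish. *)
set a := K^-1; set b := a * D * P + e.
have a_gt0 : 0 < a by rewrite invr_gt0.
have b_gt0 : 0 < b.
  by rewrite ltr_wpDl // mulr_ge0 ?delta_term_ge0 // mulr_ge0 ?Dm_ge0 // ltW.
have inner_le : a * \sum_(u in S m) \sum_(v in S m.+1) w u v * g u ^+ 2 <= b * F.
  apply: le_trans (ler_wpM2l (ltW a_gt0) (inner_mass_le_Dm m)) _.
  rewrite mulrA; apply: le_trans (ler_wpM2l _ mass_le) _.
    by rewrite mulr_ge0 ?Dm_ge0 // ltW.
  by rewrite mulrA ler_wpM2r ?energy_below_ge0 // lerDl ltW.
rewrite (_ : _ + e * (E + F) = (a + b) * (E + F)); last by rewrite /b /a; ring.
rewrite -(ler_pM2l b_gt0).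
have -> : b * layer_mass m.+1 = a * b * (K * layer_mass m.+1).
  by rewrite /a; field; rewrite gt_eqF.
apply: le_trans (ler_wpM2l _ (Km_layer_mass_le m)) _; first by rewrite mulr_ge0 ?ltW.
apply: le_trans (layer_cauchy m a b) _.
rewrite mulrCA; apply: ler_wpM2l; first by rewrite addr_ge0 ?ltW.
by rewrite mulrDr lerD2l.
Qed.

Variable n : nat.
Hypotheses (S_part : is_partition n S) (K_gt0 : forall m, (m < n)%N -> 0 < Km w S m).
Hypothesis g_S0 : forall v, v \in S 0%N -> g v = 0.

Lemma layer_mass_le m : (m <= n)%N -> layer_mass m <= delta_term m * energy_below m.
Proof.
elim: m => [_|m IHm m_lt]; last exact: layer_mass_step (K_gt0 m_lt) (IHm (ltnW m_lt)).
by rewrite /layer_mass big1 ?delta_term0 ?mul0r // => v v_in; rewrite g_S0 ?expr0n.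
Qed.

Lemma energy_below_le_dirichlet m : (m <= n)%N -> energy_below m <= dirichlet.
Proof.
move=> m_le; pose H u := \sum_v w u v * (g u - g v) ^+ 2.
have H_ge0 u : 0 <= H u by apply: sumr_ge0 => v _; rewrite mulr_ge0 ?sqr_ge0.
have layer_le j : layer_energy j <= \sum_(u in S j) H u.
  apply: ler_sum => u _; rewrite [leRHS](bigID (mem (S j.+1))) /= lerDl.
  by apply: sumr_ge0 => v _; rewrite mulr_ge0 ?sqr_ge0.
rewrite /dirichlet (big_partition _ S_part) (big_cat_nat _ (n := m)) //=.
  apply: ler_wpDr; first by do 2![apply: sumr_ge0 => ? _]; apply: H_ge0.
  by apply: ler_sum_nat => j _; apply: layer_le.
exact: leqW.
Qed.

Theorem hardy_inequality : \sum_v g v ^+ 2 <= delta2sq w n S * dirichlet.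
Proof.
have -> : delta2sq w n S = \sum_(0 <= m < n.+1) delta_term m.
  by rewrite delta2sqE [RHS]big_ltn // delta_term0 add0r.
rewrite (big_partition _ S_part) mulr_suml; apply: ler_sum_nat => m /= m_le.
apply: le_trans (layer_mass_le m_le) _.
by rewrite ler_wpM2l ?delta_term_ge0 ?energy_below_le_dirichlet.
Qed.

Lemma delta2sq_gt0 : (0 < n)%N -> 0 < delta2sq w n S.
Proof.
move=> n_gt0; rewrite delta2sqE big_ltn // delta_termS delta_term0 mulr0 addr0.
rewrite ltr_wpDr ?invr_gt0 ?K_gt0 //.
by apply: sumr_ge0 => m _; apply: delta_term_ge0.
Qed.

Lemma laplacian_rayleigh : (0 < n)%N ->
  (2 * delta2sq w n S)^-1 * \sum_v g v ^+ 2 <= qform (laplacian w) g.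
Proof.
move=> n_gt0; have delta_gt0 := delta2sq_gt0 n_gt0.
rewrite ler_pdivrMl ?mulr_gt0 //.
have -> : 2 * delta2sq w n S * qform (laplacian w) g = delta2sq w n S * dirichlet.
  by rewrite dirichlet_laplacian; ring.
exact: hardy_inequality.
Qed.

End Hardy.

Lemma char_poly_conj (F : comUnitRingType) n (P A : 'M[F]_n) : P \in unitmx ->
  char_poly (invmx P *m A *m P) = char_poly A.
Proof.
move=> P_unit; rewrite /char_poly /char_poly_mx !map_mxM.
set Q := map_mx polyC (invmx P); set Pp := map_mx polyC P.
have QP : Q *m Pp = 1%:M by rewrite -map_mxM mulVmx // map_mx1.
have PQ : Pp *m Q = 1%:M by rewrite -map_mxM mulmxV // map_mx1.
have -> : 'X%:M - Q *m map_mx polyC A *m Pp = Q *m ('X%:M - map_mx polyC A) *m Pp.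
  by rewrite mulmxBr mulmxBl mul_mx_scalar -scalemxAl QP scalemx1.
by rewrite !det_mulmx mulrC mulrA -det_mulmx PQ det1 mul1r.
Qed.

Lemma supported_row_vanishing (F : fieldType) n (P : 'M[F]_n) (J S0 : {set 'I_n}) :
  (#|S0| < #|J|)%N -> exists a : 'rV[F]_n,
    [/\ a != 0, forall k, k \notin J -> a 0 k = 0 & forall v, v \in S0 -> (a *m P) 0 v = 0].
Proof.
move=> S0_lt_J.
pose E : 'M[F]_(#|J|, n) := \matrix_(i, k) (enum_val i == k)%:R.
pose M : 'M[F]_(#|J|, #|S0|) := \matrix_(i, j) (E *m P) i (enum_val j).
have : kermx M != 0.
  by rewrite -mxrank_eq0 mxrank_ker subn_eq0 -ltnNge (leq_ltn_trans (rank_leq_col M)).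
case/rowV0Pn => b /sub_kermxP bM b_neq0.
have bE_val i : (b *m E) 0 (enum_val i) = b 0 i.
  rewrite mxE (bigD1 i) //= mxE eqxx mulr1 big1 ?addr0 // => i' i'_neq_i.
  by rewrite mxE (inj_eq enum_val_inj) (negbTE i'_neq_i) mulr0.
exists (b *m E); split.
- apply: contraNneq b_neq0 => bE0; apply/eqP/rowP => i.
  by rewrite -bE_val bE0 !mxE.
- move=> k k_notin; rewrite mxE big1 // => i _; rewrite mxE.
  by case: eqP => [eq_ik | _]; [rewrite -eq_ik enum_valP in k_notin | rewrite mulr0].
- move=> v v_in; have := congr1 (fun x : 'M_(1, _) => x 0 (enum_rank_in v_in v)) bM.
  rewrite mxE [RHS]mxE => <-; rewrite -mulmxA mxE; apply: eq_bigr => i _.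
  by rewrite [in RHS]mxE enum_rankK_in.
Qed.

Section ComplexParts.
Variable R : rcfType.
Local Notation Re := (@complex.Re R).
Local Notation Im := (@complex.Im R).

Lemma conjcE (x : R[i]) : x^* = conjc x.
Proof.
have [->|x_neq0] := eqVneq x 0; first by rewrite rmorph0 conjc0.
by apply: (mulfI x_neq0); rewrite -normCK sqr_normc.
Qed.

Lemma ReMconj (x y : R[i]) : Re (x * y^*) = Re x * Re y + Im x * Im y.
Proof. by rewrite conjcE; case: x => a b; case: y => c d /=; ring. Qed.

Lemma ReMreal (r : R) (x : R[i]) : Re (real_complex R r * x) = r * Re x.
Proof. by case: x => a b /=; ring. Qed.

End ComplexParts.

Local Open Scope sesquilinear_scope.

Section UnitaryDiag.
Variables (C : numClosedFieldType) (n : nat) (P : 'M[C]_n) (d a : 'rV[C]_n).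
Hypothesis P_unitary : P \is unitarymx.

Lemma unitary_sqnorm : (a *m P *m (a *m P) ^t*) 0 0 = \sum_k a 0 k * (a 0 k)^*.
Proof.
move/unitarymxP: P_unitary => PPt.
rewrite trmx_mul map_mxM mulmxA -(mulmxA a) PPt mulmx1 mxE.
by apply: eq_bigr => k _; rewrite !mxE.
Qed.

Lemma unitary_diag_form :
  (a *m P *m (invmx P *m diag_mx d *m P) *m (a *m P) ^t*) 0 0 =
  \sum_k a 0 k * d 0 k * (a 0 k)^*.
Proof.
move/unitarymxP: (P_unitary) => PPt.
rewrite invmx_unitary // trmx_mul map_mxM !mulmxA -(mulmxA a P) PPt mulmx1.
rewrite -(mulmxA _ P) PPt mulmx1 mxE; apply: eq_bigr => k _.
by rewrite mul_mx_diag !mxE.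
Qed.

End UnitaryDiag.

Lemma rayleigh_gap_gt0 (C : numClosedFieldType) n (a d : 'rV[C]_n) (c : C) :
  a != 0 -> (forall k, ~~ (d 0 k < c) -> a 0 k = 0) ->
  0 < \sum_k (c - d 0 k) * (a 0 k * (a 0 k)^*).
Proof.
move=> a_neq0 a_supp.
have term_ge0 k : 0 <= (c - d 0 k) * (a 0 k * (a 0 k)^*).
  have [dk_lt | dk_ge] := boolP (d 0 k < c); last by rewrite a_supp // mul0r mulr0.
  by rewrite mulr_ge0 ?mul_conjC_ge0 // subr_ge0 ltW.
have [k0 ak0_neq0] : exists k, a 0 k != 0.
  apply/existsP; move: a_neq0; apply: contraNT => /existsPn a0.
  by apply/eqP/rowP => k; rewrite mxE; apply/eqP/negbNE/a0.
rewrite (bigD1 k0) //= ltr_wpDr ?sumr_ge0 // mulr_gt0 ?mul_conjC_gt0 //.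
rewrite subr_gt0; apply: contraNT ak0_neq0 => dk0_ge.
by rewrite a_supp.
Qed.

Section MinMax.
Variables (R : rcfType) (N : nat) (A : 'M[R]_N).
Hypothesis A_sym : A^T = A.
Local Notation toC := (real_complex R).
Local Notation Re := (@complex.Re R).
Local Notation Im := (@complex.Im R).
Local Notation Ac := (map_mx toC A).

Lemma complexified_normal : Ac \is normalmx.
Proof.
have Ac_adj : Ac ^t* = Ac.
  apply/matrixP => i j; rewrite !mxE conjcE conjc_real.
  by rewrite -[in RHS]A_sym mxE.
by apply/normalmxP; rewrite Ac_adj.
Qed.

Lemma qform_complexified (f : 'rV[R[i]]_N) :
  Re ((f *m Ac *m f ^t*) 0 0) = qform A (fun i => Re (f 0 i)) + qform A (fun i => Im (f 0 i)).
Proof.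
rewrite mxE raddf_sum [qform A _]exchange_big [qform A (fun i => Im _)]exchange_big.
rewrite -big_split; apply: eq_bigr => j _ /=.
rewrite mxE mulr_suml raddf_sum -big_split; apply: eq_bigr => i _ /=.
by rewrite !mxE -[in LHS]mulrA [in LHS]mulrCA ReMreal ReMconj; ring.
Qed.

Lemma sqnorm_complexified (f : 'rV[R[i]]_N) :
  Re ((f *m f ^t*) 0 0) = \sum_i Re (f 0 i) ^+ 2 + \sum_i Im (f 0 i) ^+ 2.
Proof.
rewrite mxE raddf_sum -big_split; apply: eq_bigr => i _ /=.
by rewrite !mxE ReMconj !expr2.
Qed.

Lemma count_spectral_diag (s : seq R) (c : R) :
  char_poly A = \prod_(x <- s) ('X - x%:P) ->
  count (fun x => x < c) s = #|[set k | spectral_diag Ac 0 k < toC c]|.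
Proof.
move=> chiA; set d := spectral_diag Ac.
have /orthomx_spectralP Ac_decomp := complexified_normal.
have d_roots : \prod_(k < N) ('X - (d 0 k)%:P) = \prod_(x <- map toC s) ('X - x%:P).
  transitivity (char_poly Ac).
    rewrite Ac_decomp char_poly_conj ?spectral_unit // char_poly_trig ?diag_mx_is_trig //.
    by apply: eq_bigr => k _; rewrite mxE eqxx mulr1n.
  rewrite -map_char_poly chiA rmorph_prod big_map.
  by apply: eq_bigr => x _; apply: map_polyXsubC.
have d_perm : perm_eq [seq d 0 k | k <- enum 'I_N] (map toC s).
  by apply: prod_XsubC_eq; rewrite big_map enumT.
have := permP d_perm (fun z => z < toC c); rewrite !count_map => count_eq.
transitivity (count (preim toC (fun z => z < toC c)) s).
  by apply: eq_count => x; rewrite /= ltcR.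
rewrite -count_eq cardE /enum_mem size_filter.
by apply: eq_count => k; rewrite /= inE.
Qed.

Lemma minmax_count (S0 : {set 'I_N}) (s : seq R) (c : R) :
  (forall g, (forall v, v \in S0 -> g v = 0) -> c * \sum_v g v ^+ 2 <= qform A g) ->
  char_poly A = \prod_(x <- s) ('X - x%:P) ->
  (count (fun x : R => (x < c)%R) s <= #|S0|)%N.
Proof.
move=> qform_ge chiA; rewrite (count_spectral_diag c chiA) leqNgt.
set P := spectralmx Ac; set d := spectral_diag Ac.
apply/negP => /(supported_row_vanishing P) [a [a_neq0 a_supp aP_S0]].
have P_unitary : P \is unitarymx := spectral_unitarymx Ac.
have /orthomx_spectralP Ac_decomp := complexified_normal.
set f := a *m P.
have gap : 0 < toC c * (f *m f ^t*) 0 0 - (f *m Ac *m f ^t*) 0 0.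
  rewrite unitary_sqnorm // Ac_decomp unitary_diag_form // mulr_sumr -sumrB.
  rewrite (eq_bigr (fun k => (toC c - d 0 k) * (a 0 k * (a 0 k)^*))) => [|k _]; last by ring.
  by apply: rayleigh_gap_gt0 => // k dk_ge; rewrite a_supp // inE.
have := qform_ge (fun i => Re (f 0 i)) (fun v v_in => congr1 Re (aP_S0 v v_in)).
have := qform_ge (fun i => Im (f 0 i)) (fun v v_in => congr1 Im (aP_S0 v v_in)).
move: gap; rewrite ltcE => /andP [_].
rewrite raddfB /= ReMreal qform_complexified sqnorm_complexified.
lra.
Qed.
End MinMax.

Theorem corollary3p5 (R : realType) (N : nat) (w : 'I_N -> 'I_N -> R)
  (s : seq R) (k : nat) (n : nat) (S : nat -> {set 'I_N}) :
  weighted_graph w ->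
  laplacian_spectrum w s ->
  (k < N)%N ->
  (#|S 0%N| <= k)%N ->
  is_partition n S ->
  (forall m, (m < n)%N -> 0 < Km w S m) ->
  (2 * delta2sq w n S)^-1 <= s`_k.
Proof.
case=> w_sym w_ge0 _ _ [size_s sorted_s chiL] k_lt S0_le S_part K_gt0.
have n_gt0 : (0 < n)%N := partition_length_gt0 S_part (leq_ltn_trans S0_le k_lt).
apply: nth_count_ge sorted_s _; rewrite size_s k_lt andbT.
apply: leq_trans S0_le; apply: minmax_count chiL => [|g g_S0].
  exact: laplacian_sym.
exact: laplacian_rayleigh.
Qed.
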